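(* Let $D\ge 2$, $\eta=\mathrm{diag}(-1,1,\dots,1)$, and let $g_{\mu\nu}$, $f_{\mu\nu}$ be real symmetric invertible $D\times D$ matrices of Lorentzian signature $(-,+,\dots,+)$, with inverses $g^{\mu\nu}$, $f^{\mu\nu}$. If the matrix $g^{-1}f$ has no (real) negative eigenvalues, then there exist real matrices $e_A{}^\mu$ and $L^B{}_\nu$ with $\eta^{AB}e_A{}^\mu e_B{}^\nu=g^{\mu\nu}$ and $\eta_{AB}L^A{}_\mu L^B{}_\nu=f_{\mu\nu}$ such that $e_A{}^\mu L_{B\mu}=e_B{}^\mu L_{A\mu}$ for all $A,B$.
   Context: Greek indices are space-time indices and capital Latin indices are Lorentz indices, lowered and raised with $\eta_{AB}$ and $\eta^{AB}$ (so $L_{B\mu}=\eta_{BC}L^C{}_\mu$); repeated indices are summed. *)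

From HB Require Import structures.
From mathcomp Require Import all_boot all_order all_algebra.
From mathcomp Require Export reals.
Set Implicit Arguments. Unset Strict Implicit. Unset Printing Implicit Defensive.
Import Order.TTheory GRing.Theory Num.Theory.
Local Open Scope ring_scope.

(* Minkowski metric eta = diag(-1, 1, ..., 1) on indices 'I_D; the index 0
   is the time direction. eta is its own inverse, so eta^{AB} = eta_{AB}. *)
Definition minkowski (R : pzRingType) (D : nat) : 'M[R]_D :=
  \matrix_(i < D, j < D)
    (if i == j then (if nat_of_ord i == 0%N then -1 else 1) else 0).

(* A real symmetric matrix has Lorentzian signature (-,+,...,+) iff it is
   congruent to eta (Sylvester's law of inertia: signature = inertia). *)
Definition lorentzian (R : realType) (D : nat) (g : 'M[R]_D) : Prop :=
  exists P : 'M[R]_D, P \in unitmx /\ P^T *m g *m P = minkowski R D.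

From HB Require Import structures.
From mathcomp Require Import all_boot all_order all_algebra.
From mathcomp Require Import reals.
From mathcomp Require Import complex ring lra zify.
Import Order.TTheory GRing.Theory Num.Theory.
Set Implicit Arguments.
Unset Strict Implicit.
Unset Printing Implicit Defensive.
Local Open Scope ring_scope.

(* Let M = g^-1 f. As M has no eigenvalue in (-oo, 0], X is a square modulo
   the characteristic polynomial of M: modulo an irreducible real factor
   (X - a with a > 0, or (X - a)^2 + b^2) this is elementary, it lifts to
   powers of a factor by Newton's iteration (X being invertible modulo the
   factor), and coprime factors are combined by the Chinese remainder
   theorem. Cayley-Hamilton turns p^2 = X mod char_poly M into a square root
   S = p(M) of M; as a polynomial in M, S is self-adjoint for g, i.e. g S is
   symmetric. With P^T g P = eta, the vielbeins e = P^T and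
   L = eta P^T g S satisfy e^T eta e = g^-1, L^T eta L = S^T g S = g M = f,
   and e (eta L)^T = P^T (g S) P is symmetric. *)

Section SquareModulo.
Variable F : fieldType.
Implicit Types a b d p q x : {poly F}.

Definition is_sqr_mod q x := exists p, q %| p ^+ 2 - x.

Lemma is_sqr_mod_dvdp d q x : d %| q -> is_sqr_mod q x -> is_sqr_mod d x.
Proof. by move=> dq [p qp]; exists p; apply: dvdp_trans qp. Qed.

Lemma is_sqr_modM a b x :
  coprimep a b -> is_sqr_mod a x -> is_sqr_mod b x -> is_sqr_mod (a * b) x.
Proof.
move=> cop_ab [pa apa] [pb bpb].
have [[ua ub] /= Bezout_ab] := Bezout_eq1_coprimepP _ _ cop_ab.
have crt p0 p1 A B : A + B = 1 ->
    (p1 * A + p0 * B) ^+ 2 - x = (p0 ^+ 2 - x) + A * ((p1 - p0) * (p1 * A + p0 * B + p0)).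
  move=> AB; have -> : B = 1 - A by rewrite -AB; ring.
  ring.
exists (pb * (ua * a) + pa * (ub * b)); rewrite Gauss_dvdp //; apply/andP; split.
  by rewrite crt // dvdp_add // dvdp_mulr // dvdp_mull.
rewrite [pb * _ + _]addrC (crt _ _ _ _ (etrans (addrC _ _) Bezout_ab)).
by rewrite dvdp_add // dvdp_mulr // dvdp_mull.
Qed.

(* Newton's step p - (p^2 - x) u / 2, where u = x^-1 p is an inverse of p
   modulo q. *)
Lemma is_sqr_mod_sqr q x :
  2 != 0 :> F -> coprimep q x -> is_sqr_mod q x -> is_sqr_mod (q ^+ 2) x.
Proof.
move=> two_neq0 cop_qx [p qe].
have [[w1 w2] /= Bezout_qx] := Bezout_eq1_coprimepP _ _ cop_qx.
set e := p ^+ 2 - x in qe; set u := w2 * p; set c := (2^-1 : F)%:P.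
have two_c : 1 - 2 * c = 0.
  by rewrite -(rmorph_nat (@polyC F)) -polyCM mulfV // subrr.
have newton : (p - c * e * u) ^+ 2 - x
    = e * (1 - u * p) + c ^+ 2 * (e * e) * u ^+ 2 + e * u * p * (1 - 2 * c).
  by rewrite /e; ring.
have q_1up : q %| 1 - u * p.
  have -> : 1 - u * p = w1 * q - w2 * e by rewrite /u /e -Bezout_qx; ring.
  by rewrite dvdp_sub ?dvdp_mull.
exists (p - c * e * u); rewrite newton two_c mulr0 addr0 expr2.
by rewrite dvdp_add ?(dvdp_mul qe) // dvdp_mulr // dvdp_mull ?dvdp_mul.
Qed.

End SquareModulo.

Section SquareRootOfX.
Variable R : rcfType.
Implicit Types (a b t : R) (q : {poly R}).

Lemma is_sqr_modX_XsubC a : 0 < a -> is_sqr_mod ('X - a%:P) 'X.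
Proof.
move=> a_gt0; exists (Num.sqrt a)%:P.
by rewrite -rmorphXn /= sqr_sqrtr ?ltW // -[a%:P - _]opprB dvdpNr.
Qed.

(* For z = a + ib one has (z + |z|)^2 = 2 (|z| + a) z, which gives a square
   root of X modulo the real minimal polynomial of z. *)
Lemma is_sqr_modX_quadratic a b :
  b != 0 -> is_sqr_mod (('X - a%:P) ^+ 2 + (b ^+ 2)%:P) 'X.
Proof.
move=> b_neq0; set s := Num.sqrt (a ^+ 2 + b ^+ 2).
have s_ge0 : 0 <= s by apply: sqrtr_ge0.
have s2 : s ^+ 2 = a ^+ 2 + b ^+ 2 by rewrite sqr_sqrtr // addr_ge0 ?sqr_ge0.
have b2_gt0 : 0 < b ^+ 2 by rewrite exprn_even_gt0.
have sa_gt0 : 0 < 2 * s + 2 * a by nra.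
set al := (Num.sqrt (2 * s + 2 * a))^-1.
have al2 : al ^+ 2 * (2 * s + 2 * a) = 1.
  by rewrite exprVn sqr_sqrtr ?ltW // mulVf // gt_eqF.
exists (al%:P * 'X + (s * al)%:P).
have -> : (al%:P * 'X + (s * al)%:P) ^+ 2 - 'X
    = (al ^+ 2)%:P * (('X - a%:P) ^+ 2 + (b ^+ 2)%:P).
  have -> : b ^+ 2 = s ^+ 2 - a ^+ 2 by rewrite s2; ring.
  by rewrite -{2}['X]mul1r -polyC1 -al2; ring.
exact: dvdp_mull.
Qed.

Lemma quadratic_irreducible a b :
  b != 0 -> irreducible_poly (('X - a%:P) ^+ 2 + (b ^+ 2)%:P).
Proof.
move=> b_neq0; apply: cubic_irreducible.
  by rewrite size_polyDl size_exp_XsubC // size_polyC; case: (_ != 0).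
move=> t; rewrite /root !hornerE.
have : 0 < (t - a) ^+ 2 + b ^+ 2 by rewrite ltr_wpDl ?sqr_ge0 ?exprn_even_gt0.
by rewrite lt0r => /andP[].
Qed.

Lemma quadratic_dvdp_complex_root q a b : b != 0 ->
  root (map_poly (real_complex R) q) (a +i* b)%C ->
  ('X - a%:P) ^+ 2 + (b ^+ 2)%:P %| q.
Proof.
move=> b_neq0 qz; set qC := map_poly (real_complex R) q in qz.
have i2 : ('i%C%:P : {poly R[i]}) ^+ 2 = -1 by rewrite -rmorphXn sqr_i rmorphN.
have factor (X A B I : {poly R[i]}) : I ^+ 2 = -1 ->
    (X - A) ^+ 2 + B ^+ 2 = (X - (A + I * B)) * (X - (A + I * - B)).
  move=> I2; have -> : (X - (A + I * B)) * (X - (A + I * - B))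
      = (X - A) ^+ 2 - I ^+ 2 * B ^+ 2 by ring.
  by rewrite I2; ring.
have qCJ : map_poly conjc qC = qC.
  by rewrite -map_poly_comp; apply: eq_map_poly => y /=; apply: conjc_real.
rewrite -(dvdp_map (real_complex R)) -/qC rmorphD rmorphXn rmorphB /=.
rewrite map_polyX !map_polyC /= rmorphXn /= [(_ ^+ 2)%:P]rmorphXn /=.
rewrite (factor _ _ _ _ i2) -polyCN -!polyCM -!polyCD.
have -> : (a%:C + 'i%C * b%:C)%C = (a +i* b)%C by rewrite [RHS]complexE.
have -> : (a%:C + 'i%C * - b%:C)%C = (a -i* b)%C.
  by rewrite [RHS]complexE /= rmorphN.
rewrite Gauss_dvdp; last first.
  rewrite coprimep_XsubC2 // eq_complex /= subrr eqxx /= subr_eq0 eq_sym.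
  by rewrite -subr_eq0 opprK -mulr2n mulrn_eq0 negb_or b_neq0.
rewrite !dvdp_XsubCl qz /=.
by rewrite -[(a -i* b)%C]/(conjc (a +i* b)%C) -complex_root_conj qCJ.
Qed.

Lemma irreducible_factor_sqr_modX q : (1 < size q)%N ->
    (forall t, t <= 0 -> ~~ root q t) ->
  exists h, [/\ irreducible_poly h, h %| q & is_sqr_mod h 'X].
Proof.
move=> q_gt1 no_root_le0.
have : size (map_poly (real_complex R) q) != 1%N.
  by rewrite size_map_poly; case: (size q) q_gt1 => [|[]].
case/closed_rootP => -[a b] qz.
have [b0|b_neq0] := eqVneq b 0.
  rewrite b0 complexr0 fmorph_root in qz.
  have a_gt0 : 0 < a by rewrite ltNge; apply: contraL qz; apply: no_root_le0.
  exists ('X - a%:P); split; first exact: irredp_XsubC.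
    by rewrite dvdp_XsubCl.
  exact: is_sqr_modX_XsubC.
exists (('X - a%:P) ^+ 2 + (b ^+ 2)%:P); split.
- exact: quadratic_irreducible.
- exact: quadratic_dvdp_complex_root qz.
- exact: is_sqr_modX_quadratic.
Qed.

Lemma is_sqr_modX q : q != 0 -> (forall t, t <= 0 -> ~~ root q t) ->
  is_sqr_mod q 'X.
Proof.
have [n] := ubnP (size q); elim: n q => // n IH q q_lt q_neq0 no_root_le0.
have [q_le1|q_gt1] := leqP (size q) 1%N.
  exists 0; have : size q == 1%N by rewrite eqn_leq q_le1 size_poly_gt0.
  by rewrite size_poly_eq1 => /eqp_dvdl ->; rewrite dvd1p.
have [h [irr_h hq sqr_h]] := irreducible_factor_sqr_modX q_gt1 no_root_le0.
have h_neq0 : h != 0 by apply: irredp_neq0.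
set q1 := q %/ h; have Eq : q = q1 * h by rewrite divpK.
have q1_neq0 : q1 != 0 by apply: contraNneq q_neq0 => q10; rewrite Eq q10 mul0r.
have no_root_q1 t : t <= 0 -> ~~ root q1 t.
  by move/no_root_le0; apply: contra; rewrite Eq rootM => ->.
have q1_lt : (size q1 < n)%N.
  have [h_gt1 _] := irr_h; rewrite size_divp //.
  by move: q_lt h_gt1 q_gt1; move: (size q) (size h) => sq sh; lia.
have sqr_q1 := IH q1 q1_lt q1_neq0 no_root_q1.
have [hq1|] := boolP (h %| q1); last first.
  rewrite -irreducible_poly_coprime // => cop_hq1.
  by rewrite Eq mulrC; apply: is_sqr_modM cop_hq1 sqr_h sqr_q1.
apply: is_sqr_mod_dvdp (is_sqr_mod_sqr _ _ sqr_q1).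
- by rewrite Eq expr2 dvdp_mul.
- by rewrite pnatr_eq0.
- by rewrite coprimepX no_root_q1.
Qed.

End SquareRootOfX.

Lemma horner_mx_adjoint (R : comNzRingType) n (g M : 'M[R]_n.+1) p :
  M^T *m g = g *m M -> (horner_mx M p)^T *m g = g *m horner_mx M p.
Proof.
move=> adjM; elim/poly_ind: p => [|p c IHp].
  by rewrite rmorph0 trmx0 mul0mx mulmx0.
rewrite rmorphD rmorphM /= horner_mx_X horner_mx_C -mulmxE.
rewrite linearD /= trmx_mul tr_scalar_mx mulmxDl mulmxDr -scalar_mxC.
congr (_ + _); rewrite -mulmxA IHp mulmxA adjM -[LHS]mulmxA; congr (_ *m _).
exact/esym/(comm_horner_mx p (erefl (M *m M))).
Qed.

Lemma horner_mx_sqr (F : fieldType) n (M : 'M[F]_n.+1) p :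
  char_poly M %| p ^+ 2 - 'X -> horner_mx M p *m horner_mx M p = M.
Proof.
case/dvdpP=> k hk.
have : horner_mx M (p ^+ 2 - 'X) = 0 by rewrite hk rmorphM /= Cayley_Hamilton mulr0.
by rewrite rmorphB rmorphXn /= horner_mx_X mulmxE => /eqP; rewrite subr_eq0 => /eqP.
Qed.

Lemma char_poly_no_root_le0 (R : numFieldType) n (M : 'M[R]_n) :
    M \in unitmx -> (forall a, a < 0 -> ~~ eigenvalue M a) ->
  forall t, t <= 0 -> ~~ root (char_poly M) t.
Proof.
move=> uM no_neg t; rewrite -eigenvalue_root_char le_eqVlt.
case/orP=> [/eqP->|/no_neg //]; apply/eigenvalueP => -[v].
rewrite scale0r => /(congr1 (mulmx^~ (invmx M))).
by rewrite mulmxK // mul0mx => ->; rewrite eqxx.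
Qed.

Lemma adjoint_sqrt_mx (R : rcfType) n (g M : 'M[R]_n.+1) :
    M^T *m g = g *m M -> M \in unitmx ->
    (forall a, a < 0 -> ~~ eigenvalue M a) ->
  exists2 S, S *m S = M & S^T *m g = g *m S.
Proof.
move=> adjM uM no_neg.
have char_neq0 : char_poly M != 0 by apply/monic_neq0/char_poly_monic.
have [p hp] := is_sqr_modX char_neq0 (char_poly_no_root_le0 uM no_neg).
exists (horner_mx M p); first exact: horner_mx_sqr.
exact: horner_mx_adjoint.
Qed.

Lemma minkowski_tr (R : pzRingType) D : (minkowski R D)^T = minkowski R D.
Proof. by apply/matrixP => i j; rewrite !mxE eq_sym; case: eqP => // ->. Qed.

Lemma minkowskiK (R : pzRingType) D :
  minkowski R D *m minkowski R D = 1%:M.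
Proof.
apply/matrixP => i j; rewrite !mxE (bigD1 i) //= big1 ?addr0.
  rewrite !mxE eqxx; case: (i =P j) => [->|/eqP nij]; rewrite ?eqxx /=.
    by case: ifP; rewrite ?mulNr ?mul1r ?opprK.
  by rewrite mulr0.
by move=> k /negPf nki; rewrite !mxE eq_sym nki mul0r.
Qed.

Lemma minkowski_congr_invmx (R : comUnitRingType) D (g P : 'M[R]_D) :
    g \in unitmx -> P \in unitmx -> P^T *m g *m P = minkowski R D ->
  P *m minkowski R D *m P^T = invmx g.
Proof.
set eta := minkowski R D => ug uP hP.
have hPg : P^T *m g = eta *m invmx P by rewrite -hP mulmxK.
rewrite -[LHS](mulmxK ug) -[P *m eta *m P^T *m g]mulmxA hPg.
by rewrite -mulmxA !mulmxA -(mulmxA P) minkowskiK mulmx1 mulmxV // mul1mx.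
Qed.

Lemma sum_bilinear_mx (R : comPzRingType) D (N X Y : 'M[R]_D) mu nu :
  \sum_(A < D) \sum_(B < D) N A B * X A mu * Y B nu = (X^T *m N *m Y) mu nu.
Proof.
rewrite mxE; under [RHS]eq_bigr do rewrite mxE big_distrl /=.
rewrite exchange_big /=; apply: eq_bigr => A _; apply: eq_bigr => B _.
by rewrite !mxE; ring.
Qed.

Lemma sum_mul_rows (R : pzSemiRingType) D (X Y : 'M[R]_D) A B :
  \sum_(mu < D) X A mu * Y B mu = (X *m Y^T) A B.
Proof. by rewrite mxE; apply: eq_bigr => mu _; rewrite mxE. Qed.

Theorem proposition5 (R : realType) (D : nat) (g f : 'M[R]_D) :
  (2 <= D)%N ->
  g^T = g -> f^T = f ->
  g \in unitmx -> f \in unitmx ->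
  lorentzian g -> lorentzian f ->
  (forall a : R, a < 0 -> ~~ eigenvalue (invmx g *m f) a) ->
  exists e L : 'M[R]_D,
    [/\ forall mu nu : 'I_D,
          \sum_(A < D) \sum_(B < D) minkowski R D A B * e A mu * e B nu
            = invmx g mu nu,
        forall mu nu : 'I_D,
          \sum_(A < D) \sum_(B < D) minkowski R D A B * L A mu * L B nu
            = f mu nu
      & forall A B : 'I_D,
          \sum_(mu < D) e A mu * (minkowski R D *m L) B mu
            = \sum_(mu < D) e B mu * (minkowski R D *m L) A mu].
Proof.
case: D g f => [//|n] g f _ gT fT ug uf [P [uP hP]] _ no_neg.
set eta := minkowski R n.+1 in hP *; set M := invmx g *m f in no_neg.
have adjM : M^T *m g = g *m M.
  by rewrite trmx_mul trmx_inv gT fT -mulmxA mulVmx // mulmx1 mulmxA mulmxV // mul1mx.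
have uM : M \in unitmx by rewrite unitmx_mul unitmx_inv ug.
have [S S2 adjS] := adjoint_sqrt_mx adjM uM no_neg.
have gS_sym : (g *m S)^T = g *m S by rewrite trmx_mul gT.
have ginv := minkowski_congr_invmx ug uP hP.
have etaL : eta *m (eta *m P^T *m (g *m S)) = P^T *m (g *m S).
  by rewrite !mulmxA minkowskiK mul1mx.
have gS_ginv_gS : g *m S *m (P *m eta *m P^T) *m (g *m S) = f.
  by rewrite ginv mulmxA mulmxKV // -mulmxA S2 /M mulmxA mulmxV // mul1mx.
have Psym : (P^T *m (g *m S *m P))^T = P^T *m (g *m S *m P).
  by rewrite trmx_mul trmxK [(_ *m P)^T]trmx_mul gS_sym mulmxA.
exists P^T, (eta *m P^T *m (g *m S)); split => [mu nu|mu nu|A B].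
- by rewrite sum_bilinear_mx trmxK ginv.
- rewrite sum_bilinear_mx -mulmxA etaL trmx_mul gS_sym trmx_mul minkowski_tr trmxK.
  by rewrite -gS_ginv_gS !mulmxA.
- rewrite !sum_mul_rows etaL trmx_mul gS_sym trmxK -[in LHS]Psym mxE.
  by rewrite mulmxA.
Qed.
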